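(* Let $B$ be a category, $A$ the discrete category on the set of objects of $B$, and $i\colon A\to B$ the inclusion, regarded in the bicategory $\mathcal K$ of profunctors via $i_*$, with right adjoint $i^*$. Let $d\colon \mathrm{ob}B\to\mathrm{ob}B$ be a function, regarded as a functor $d\colon A\to B$ and hence as the profunctor $d_*$. Then monoid structures on $d_*$ in the skew monoidal category $\mathcal K(A,B)$ (tensor $g\otimes f=gi^*f$, unit $i$, $\lambda=\epsilon f$, $\rho=f\eta$) are in bijection with mw-monad structures on $B$ with object function $d$: a 2-cell $K\colon i\to d$ corresponds to morphisms $K_x\colon x\to dx$, a 2-cell $T\colon di^*d\to d$ corresponds to functions $T\colon B(y,dx)\to B(dy,dx)$, and the three monoid axioms correspond exactly to the three mw-monad axioms. Under this identification, the monoidal functor $u=\mathcal K(i,B)\colon\mathcal K(B,B)\to\mathcal K(A,B)$ sends a monad on $B$ to its corresponding mw-monad (with $Tf$ given by $Df$ followed by the multiplication).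
   Context: A profunctor $p\colon A\to B$ is a functor $B^{op}\times A\to\mathbf{Set}$; profunctors compose by coends, forming a bicategory. A functor $f\colon A\to B$ gives a profunctor $f_*(b,a)=B(b,fa)$, which has right adjoint $f^*(a,b)=B(fa,b)$. A monoid in a skew monoidal category $(\mathcal C,\otimes,I,\alpha,\lambda,\rho)$ is an object $M$ with $\mu\colon M\otimes M\to M$ and $\eta\colon I\to M$ with $\mu(\mu\otimes1)=\mu(1\otimes\mu)\alpha$, $\mu(\eta\otimes1)=\lambda_M$, $\mu(1\otimes\eta)\rho_M=1_M$. An mw-monad on a category $\mathcal C$ consists of a function $D\colon\mathrm{ob}\,\mathcal C\to\mathrm{ob}\,\mathcal C$, functions $T\colon\mathcal C(X,DY)\to\mathcal C(DX,DY)$, and morphisms $K_X\colon X\to DX$ such that $Tg\circ Tf=T(Tg\circ f)$, $Tf\circ K=f$, and $TK_X=1_{DX}$. *)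

From Stdlib Require Import Relations ClassicalEpsilon.



Record Cat := {
  ob : Type;
  hom : ob -> ob -> Type;
  idm : forall a, hom a a;
  cmp : forall a b c, hom b c -> hom a b -> hom a c;
  cmp_assoc : forall a b c e (h : hom c e) (g : hom b c) (f : hom a b),
      cmp a c e h (cmp a b c g f) = cmp a b e (cmp b c e h g) f;
  cmp_idl : forall a b (f : hom a b), cmp a b b (idm b) f = f;
  cmp_idr : forall a b (f : hom a b), cmp a a b f (idm a) = f }.
Arguments hom {_} _ _.
Arguments idm {_} _.
Arguments cmp {_ _ _ _} _ _.

Definition Disc (X : Type) : Cat.
Proof.
  refine {| ob := X; hom := fun a b => a = b; idm := fun a => eq_refl;
            cmp := fun a b c g f => eq_trans f g |}.
  - intros a b c e h g f; destruct h, g, f; reflexivity.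
  - intros a b f; destruct f; reflexivity.
  - intros a b f; destruct f; reflexivity.
Defined.

Record Functor (C D : Cat) := {
  fob : ob C -> ob D;
  fmap : forall a b, @hom C a b -> @hom D (fob a) (fob b);
  fmap_id : forall a, fmap a a (@idm C a) = @idm D (fob a);
  fmap_cmp : forall a b c (g : @hom C b c) (f : @hom C a b),
      fmap a c (@cmp C _ _ _ g f) = @cmp D _ _ _ (fmap b c g) (fmap a b f) }.
Arguments fob {_ _} _ _.
Arguments fmap {_ _} _ {_ _} _.

Definition discF (B : Cat) (f : ob B -> ob B) : Functor (Disc (ob B)) B.
Proof.
  refine (@Build_Functor (Disc (ob B)) B f
            (fun a b (e : @hom (Disc (ob B)) a b) =>
              match e in _ = b' return @hom B (f a) (f b') with
              | eq_refl => idm (f a) end) _ _).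
  - intros a; reflexivity.
  - intros a b c g h; simpl in *; destruct g, h; simpl.
    symmetry; apply cmp_idl.
Defined.

Definition incl (B : Cat) : Functor (Disc (ob B)) B := discF B (fun x => x).

(** * Profunctors  p : C -> D  is  D^op x C -> Type  *)
Record Prof (C D : Cat) := {
  pob : ob D -> ob C -> Type;
  pmap : forall d' d c c', @hom D d' d -> @hom C c c' -> pob d c -> pob d' c' }.
Arguments pob {_ _} _ _ _.
Arguments pmap {_ _} _ {_ _ _ _} _ _ _.

Definition HomP (C : Cat) : Prof C C :=
  {| pob := fun d c => @hom C d c;
     pmap := fun d' d c c' h k x => cmp k (cmp x h) |}.

Definition pstar {C D : Cat} (F : Functor C D) : Prof C D :=
  {| pob := fun d c => @hom D d (fob F c);
     pmap := fun d' d c c' h k x => cmp (fmap F k) (cmp x h) |}.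
Definition pupper {C D : Cat} (F : Functor C D) : Prof D C :=
  {| pob := fun c d => @hom D (fob F c) d;
     pmap := fun c' c d d' k h x => cmp h (cmp x (fmap F k)) |}.

Definition Quot (X : Type) (R : X -> X -> Prop) : Type :=
  { P : X -> Prop | exists x, P = clos_refl_sym_trans X R x }.
Definition cls {X : Type} {R : X -> X -> Prop} (x : X) : Quot X R :=
  exist _ (clos_refl_sym_trans X R x) (ex_intro _ x eq_refl).
Definition rep {X : Type} {R : X -> X -> Prop} (q : Quot X R) : X :=
  proj1_sig (constructive_indefinite_description _ (proj2_sig q)).

(** * Composition of profunctors by coends:
      (q p)(e,c) = \int^d q(e,d) x p(d,c) *)
Section Comp.
Context {C D E : Cat} (q : Prof D E) (p : Prof C D).
Definition CTot (e : ob E) (c : ob C) : Type :=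
  { d : ob D & (pob q e d * pob p d c)%type }.
Inductive CRel (e : ob E) (c : ob C) : CTot e c -> CTot e c -> Prop :=
 | crel : forall d d' (k : @hom D d d') x y,
     CRel e c (existT (fun d0 => (pob q e d0 * pob p d0 c)%type) d' (pmap q (idm e) k x, y))
          (existT (fun d0 => (pob q e d0 * pob p d0 c)%type) d (x, pmap p k (idm c) y)).
Definition pcomp : Prof C E :=
  {| pob := fun e c => Quot (CTot e c) (CRel e c);
     pmap := fun e' e c c' h k z =>
       let '(existT _ d (x, y)) := rep z in
       cls (existT _ d (pmap q h (idm d) x, pmap p (idm d) k y)) |}.
End Comp.

Definition Tr {C D : Cat} (P Q : Prof C D) : Type :=
  forall d c, pob P d c -> pob Q d c.
Definition Natural {C D : Cat} {P Q : Prof C D} (t : Tr P Q) : Prop :=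
  forall d' d c c' (h : @hom D d' d) (k : @hom C c c') (x : pob P d c),
    t d' c' (pmap P h k x) = pmap Q h k (t d c x).
Definition TrEq {C D : Cat} {P Q : Prof C D} (s t : Tr P Q) : Prop :=
  forall d c x, s d c x = t d c x.
Definition vcomp {C D : Cat} {P Q R : Prof C D} (t : Tr Q R) (s : Tr P Q)
  : Tr P R := fun d c x => t d c (s d c x).
Definition tid {C D : Cat} (P : Prof C D) : Tr P P := fun _ _ x => x.

Definition hcomp {C D E : Cat} {q q' : Prof D E} {p p' : Prof C D}
  (b : Tr q q') (g : Tr p p') : Tr (pcomp q p) (pcomp q' p') :=
  fun e c z => let '(existT _ d (x, y)) := rep z in
               cls (existT _ d (b e d x, g d c y)).

Definition assoc {C D E F : Cat} (r : Prof E F) (q : Prof D E) (p : Prof C D)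
  : Tr (pcomp (pcomp r q) p) (pcomp r (pcomp q p)) :=
  fun f c z => let '(existT _ d (w, y)) := rep z in
               let '(existT _ e (x, v)) := rep w in
               cls (existT _ e (x, cls (existT _ d (v, y)))).
Definition assoc_inv {C D E F : Cat} (r : Prof E F) (q : Prof D E) (p : Prof C D)
  : Tr (pcomp r (pcomp q p)) (pcomp (pcomp r q) p) :=
  fun f c z => let '(existT _ e (x, w)) := rep z in
               let '(existT _ d (v, y)) := rep w in
               cls (existT _ d (cls (existT _ e (x, v)), y)).
Definition lunit {C D : Cat} (p : Prof C D) : Tr (pcomp (HomP D) p) p :=
  fun d c z => let '(existT _ d' (h, y)) := rep z in pmap p h (idm c) y.
Definition lunit_inv {C D : Cat} (p : Prof C D) : Tr p (pcomp (HomP D) p) :=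
  fun d c y => cls (existT _ d (idm d, y)).
Definition runit {C D : Cat} (p : Prof C D) : Tr (pcomp p (HomP C)) p :=
  fun d c z => let '(existT _ c' (y, k)) := rep z in pmap p (idm d) k y.
Definition runit_inv {C D : Cat} (p : Prof C D) : Tr p (pcomp p (HomP C)) :=
  fun d c y => cls (existT _ c (y, idm c)).

Definition adj_unit {C D : Cat} (F : Functor C D)
  : Tr (HomP C) (pcomp (pupper F) (pstar F)) :=
  fun c' c k => cls (existT _ (fob F c)
                  ((fmap F k : pob (pupper F) c' (fob F c)),
                   (idm (fob F c) : pob (pstar F) (fob F c) c))).
Definition adj_counit {C D : Cat} (F : Functor C D)
  : Tr (pcomp (pstar F) (pupper F)) (HomP D) :=
  fun d d' z => let '(existT _ c (x, y)) := rep z in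
                (cmp (y : @hom D (fob F c) d') (x : @hom D d (fob F c)) : pob (HomP D) d d').

Section Skew.
Context (B : Cat).
Notation A := (Disc (ob B)).
Notation i := (incl B).
Definition tens (g f : Prof A B) : Prof A B := pcomp g (pcomp (pupper i) f).
Definition tens2 {g g' f f' : Prof A B} (b : Tr g g') (c : Tr f f')
  : Tr (tens g f) (tens g' f') := hcomp b (hcomp (tid (pupper i)) c).
Definition unitK : Prof A B := pstar i.
Definition alphaK (h g f : Prof A B) : Tr (tens (tens h g) f) (tens h (tens g f)) :=
  vcomp (hcomp (tid h) (assoc (pupper i) g (pcomp (pupper i) f)))
        (assoc h (pcomp (pupper i) g) (pcomp (pupper i) f)).
Definition lamK (f : Prof A B) : Tr (tens unitK f) f :=
  vcomp (lunit f) (vcomp (hcomp (adj_counit i) (tid f))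
                         (assoc_inv (pstar i) (pupper i) f)).
Definition rhoK (f : Prof A B) : Tr f (tens f unitK) :=
  vcomp (hcomp (tid f) (adj_unit i)) (runit_inv f).

Definition MonAssoc {M : Prof A B} (mu : Tr (tens M M) M) : Prop :=
  TrEq (vcomp mu (tens2 mu (tid M)))
       (vcomp mu (vcomp (tens2 (tid M) mu) (alphaK M M M))).
Definition MonLeft {M : Prof A B} (mu : Tr (tens M M) M) (eta : Tr unitK M) : Prop :=
  TrEq (vcomp mu (tens2 eta (tid M))) (lamK M).
Definition MonRight {M : Prof A B} (mu : Tr (tens M M) M) (eta : Tr unitK M) : Prop :=
  TrEq (vcomp mu (vcomp (tens2 (tid M) eta) (rhoK M))) (tid M).
Definition Monoid (M : Prof A B) (mu : Tr (tens M M) M) (eta : Tr unitK M) : Prop :=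
  MonAssoc mu /\ MonLeft mu eta /\ MonRight mu eta.

Definition dstar (d : ob B -> ob B) : Prof A B := pstar (discF B d).

Definition PhiK (d : ob B -> ob B) (eta : Tr unitK (dstar d)) (x : ob B)
  : @hom B x (d x) := eta x x (idm x).
Definition PhiT (d : ob B -> ob B) (mu : Tr (tens (dstar d) (dstar d)) (dstar d))
  (x y : ob B) (f : @hom B x (d y)) : @hom B (d x) (d y) :=
  mu (d x) y (cls (existT _ x ((idm (d x) : pob (dstar d) (d x) x),
                               cls (existT _ x ((idm x : pob (pupper i) x x),
                                                (f : pob (dstar d) x y)))))).

Definition uK (p : Prof B B) : Prof A B := pcomp p (pstar i).
Definition uK2 {p p' : Prof B B} (b : Tr p p') : Tr (uK p) (uK p') :=
  hcomp b (tid (pstar i)).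
(** u(g) (x) u(f) -> u(g f), i.e. g eps f i, with coherence isos. *)
Definition uK_mult (g f : Prof B B) : Tr (tens (uK g) (uK f)) (uK (pcomp g f)) :=
  vcomp (assoc_inv g f (pstar i))
  (vcomp (hcomp (tid g) (lunit (pcomp f (pstar i))))
  (vcomp (hcomp (tid g) (hcomp (adj_counit i) (tid (pcomp f (pstar i)))))
  (vcomp (hcomp (tid g) (assoc_inv (pstar i) (pupper i) (pcomp f (pstar i))))
         (assoc g (pstar i) (pcomp (pupper i) (pcomp f (pstar i))))))).
Definition uK_unit : Tr unitK (uK (HomP B)) := lunit_inv (pstar i).
End Skew.

Definition MwAssoc {B : Cat} {D : ob B -> ob B}
  (T : forall x y, @hom B x (D y) -> @hom B (D x) (D y)) : Prop :=
  forall x y z (f : @hom B x (D y)) (g : @hom B y (D z)),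
    cmp (T y z g) (T x y f) = T x z (cmp (T y z g) f).
Definition MwLeft {B : Cat} {D : ob B -> ob B}
  (T : forall x y, @hom B x (D y) -> @hom B (D x) (D y))
  (K : forall x, @hom B x (D x)) : Prop :=
  forall x y (f : @hom B x (D y)), cmp (T x y f) (K x) = f.
Definition MwRight {B : Cat} {D : ob B -> ob B}
  (T : forall x y, @hom B x (D y) -> @hom B (D x) (D y))
  (K : forall x, @hom B x (D x)) : Prop :=
  forall x, T x x (K x) = idm (D x).
Definition MwMonad {B : Cat} {D : ob B -> ob B}
  (T : forall x y, @hom B x (D y) -> @hom B (D x) (D y))
  (K : forall x, @hom B x (D x)) : Prop :=
  MwAssoc T /\ MwLeft T K /\ MwRight T K.

Definition IsMonad (B : Cat) (Dm : Functor B B)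
  (m : forall x, @hom B (fob Dm (fob Dm x)) (fob Dm x))
  (e : forall x, @hom B x (fob Dm x)) : Prop :=
  (forall a b (f : @hom B a b),
      cmp (fmap Dm f) (m a) = cmp (m b) (fmap Dm (fmap Dm f))) /\
  (forall a b (f : @hom B a b), cmp (fmap Dm f) (e a) = cmp (e b) f) /\
  (forall a, cmp (m a) (fmap Dm (m a)) = cmp (m a) (m (fob Dm a))) /\
  (forall a, cmp (m a) (e (fob Dm a)) = idm (fob Dm a)) /\
  (forall a, cmp (m a) (fmap Dm (e a)) = idm (fob Dm a)).

Section MonadMonoid.
Context (B : Cat) (Dm : Functor B B)
  (m : forall x, @hom B (fob Dm (fob Dm x)) (fob Dm x))
  (e : forall x, @hom B x (fob Dm x)).
(** The multiplication D_* D_* => D_* (i.e. (DD)_* = D_* D_* followed by m_* ). *)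
Definition muD : Tr (pcomp (pstar Dm) (pstar Dm)) (pstar Dm) :=
  fun b a z => let '(existT _ c (x, y)) := rep z in
     (cmp (m a) (cmp (fmap Dm (y : @hom B c (fob Dm a))) (x : @hom B b (fob Dm c)))
       : pob (pstar Dm) b a).
Definition etaD : Tr (HomP B) (pstar Dm) :=
  fun b a h => (cmp (e a) (h : @hom B b a) : pob (pstar Dm) b a).
(** The canonical iso u(D_* ) = D_* i_* ~= (D i)_* = d_*, d = ob-part of D. *)
Definition phiD : Tr (uK B (pstar Dm)) (dstar B (fob Dm)) :=
  fun b a z => let '(existT _ b' (x, y)) := rep z in
     (cmp (fmap Dm (y : @hom B b' a)) (x : @hom B b (fob Dm b'))
       : pob (dstar B (fob Dm)) b a).
Definition phiD_inv : Tr (dstar B (fob Dm)) (uK B (pstar Dm)) :=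
  fun b a z => cls (existT _ a ((z : pob (pstar Dm) b a),
                                 (@idm B a : pob (pstar (incl B)) a a))).
(** The monoid u(D_* ), transported to d_* along phiD. *)
Definition uMu : Tr (tens B (dstar B (fob Dm)) (dstar B (fob Dm))) (dstar B (fob Dm)) :=
  vcomp phiD (vcomp (uK2 B muD)
    (vcomp (uK_mult B (pstar Dm) (pstar Dm)) (tens2 B phiD_inv phiD_inv))).
Definition uEta : Tr (unitK B) (dstar B (fob Dm)) :=
  vcomp phiD (vcomp (uK2 B etaD) (uK_unit B)).
End MonadMonoid.

From Stdlib Require Import Relations ClassicalEpsilon ProofIrrelevance FunctionalExtensionality PropExtensionality.

(** By naturality in the variables ranging over [B], a 2-cell [i => d_*] is determined by its
    values [K_x] on the identities [1_x], and a 2-cell [d i^* d => d_*] by its values [T f] on the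
    generic elements [(1_{d x}, 1_x, f)] (every element of [i^* d_*] slides to one with identity
    first component); conversely any such values extend to natural 2-cells.  Evaluating the two
    sides of each monoid axiom on generic elements turns it into the corresponding mw-monad
    equation.  For a monad [D], the monoid [u(D_* )], transported along [D_* i_* ~= (D i)_* = d_*],
    acts on [f] as [m . D f]. *)

Ltac cat_simpl := repeat (rewrite ?cmp_idl, ?cmp_idr, ?cmp_assoc).

Section Quotient.
Context {X : Type} {R : X -> X -> Prop}.

Lemma cls_rep (q : Quot X R) : cls (rep q) = q.
Proof.
  unfold rep, cls.
  destruct (constructive_indefinite_description _ (proj2_sig q)) as [x Hx]; simpl.
  destruct q as [P HP]; simpl in *; subst P.
  f_equal; apply proof_irrelevance.
Qed.

Lemma cls_eq (x y : X) : clos_refl_sym_trans X R x y -> @cls X R x = cls y.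
Proof.
  intros Hxy; unfold cls.
  assert (E : clos_refl_sym_trans X R x = clos_refl_sym_trans X R y).
  { apply functional_extensionality; intros z; apply propositional_extensionality; split.
    - intros Hz; apply rst_trans with x; [apply rst_sym|]; assumption.
    - intros Hz; apply rst_trans with y; assumption. }
  generalize (ex_intro (fun x0 => clos_refl_sym_trans X R x = clos_refl_sym_trans X R x0) x eq_refl)
             (ex_intro (fun x0 => clos_refl_sym_trans X R y = clos_refl_sym_trans X R x0) y eq_refl).
  rewrite E; intros H H'; f_equal; apply proof_irrelevance.
Qed.

Lemma rep_cls_rel (x : X) : clos_refl_sym_trans X R (rep (@cls X R x)) x.
Proof.
  pose proof (f_equal (@proj1_sig _ _) (cls_rep (@cls X R x))) as E; simpl in E.
  rewrite E; apply rst_refl.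
Qed.

Lemma rep_cls_respect {Y} (F : X -> Y) :
  (forall a b, R a b -> F a = F b) -> forall x, F (rep (@cls X R x)) = F x.
Proof.
  intros HF x.
  assert (G : forall a b, clos_refl_sym_trans X R a b -> F a = F b)
    by (intros a b H; induction H; congruence || auto).
  apply G, rep_cls_rel.
Qed.
End Quotient.

Tactic Notation "destruct_cls" ident(z) "as" simple_intropattern(p) :=
  rewrite <- (cls_rep z); destruct (rep z) as p.

Definition ProfFunctorial {C D : Cat} (p : Prof C D) : Prop :=
  (forall d c x, pmap p (@idm D d) (@idm C c) x = x) /\
  (forall d'' d' d c c' c'' (h1 : @hom D d' d) (h2 : @hom D d'' d')
          (k1 : @hom C c c') (k2 : @hom C c' c'') x,
      pmap p h2 k2 (pmap p h1 k1 x) = pmap p (cmp h1 h2) (cmp k2 k1) x).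

Lemma pmap_idm {C D : Cat} {p : Prof C D} (Hp : ProfFunctorial p) d c x :
  pmap p (@idm D d) (@idm C c) x = x.
Proof. apply Hp. Qed.

Lemma pmap_pmap {C D : Cat} {p : Prof C D} (Hp : ProfFunctorial p) d'' d' d c c' c''
  (h1 : @hom D d' d) (h2 : @hom D d'' d') (k1 : @hom C c c') (k2 : @hom C c' c'') x :
  pmap p h2 k2 (pmap p h1 k1 x) = pmap p (cmp h1 h2) (cmp k2 k1) x.
Proof. apply Hp. Qed.

Lemma HomP_functorial C : ProfFunctorial (HomP C).
Proof. split; intros; simpl; cat_simpl; reflexivity. Qed.

Lemma pstar_functorial {C D} (F : Functor C D) : ProfFunctorial (pstar F).
Proof. split; intros; simpl; rewrite ?fmap_id, ?fmap_cmp; cat_simpl; reflexivity. Qed.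

Lemma pupper_functorial {C D} (F : Functor C D) : ProfFunctorial (pupper F).
Proof. split; intros; simpl; rewrite ?fmap_id, ?fmap_cmp; cat_simpl; reflexivity. Qed.

Notation ccls q p d x y := (@cls (CTot q p _ _) (CRel q p _ _) (existT _ d (x, y))).

Section Coend.
Context {C D E : Cat} (q : Prof D E) (p : Prof C D).

Lemma ccls_slide e c d d' (k : @hom D d d') (x : pob q e d) (y : pob p d' c) :
  ccls q p d' (pmap q (idm e) k x) y = ccls q p d x (pmap p k (idm c) y).
Proof. apply cls_eq, rst_step, crel. Qed.

Context (Hq : ProfFunctorial q) (Hp : ProfFunctorial p).

Lemma pmap_ccls e' e c c' (h : @hom E e' e) (k : @hom C c c') d x y :
  pmap (pcomp q p) h k (ccls q p d x y : pob (pcomp q p) e c)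
  = ccls q p d (pmap q h (idm d) x) (pmap p (idm d) k y).
Proof.
  apply (rep_cls_respect (fun t : CTot q p e c => let '(existT _ d (x, y)) := t in
    (ccls q p d (pmap q h (idm d) x) (pmap p (idm d) k y) : pob (pcomp q p) e' c'))).
  intros _ _ [d1 d2 k0 x0 y0].
  rewrite (pmap_pmap Hq), (pmap_pmap Hp).
  replace (pmap p (cmp k0 (idm d1)) (cmp k (idm c)) y0)
    with (pmap p k0 (idm c') (pmap p (idm d2) k y0))
    by (rewrite (pmap_pmap Hp); cat_simpl; reflexivity).
  rewrite <- ccls_slide, (pmap_pmap Hq); cat_simpl; reflexivity.
Qed.

Lemma pcomp_functorial : ProfFunctorial (pcomp q p).
Proof.
  split.
  - intros e c z; destruct_cls z as [d0 [x y]].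
    rewrite pmap_ccls, (pmap_idm Hq), (pmap_idm Hp); reflexivity.
  - intros; destruct_cls x as [d0 [u v]].
    rewrite !pmap_ccls, (pmap_pmap Hq), (pmap_pmap Hp); cat_simpl; reflexivity.
Qed.
End Coend.

Ltac functorial :=
  solve [ repeat first [ assumption | apply pcomp_functorial | apply pstar_functorial
                       | apply pupper_functorial | apply HomP_functorial ] ].

Section TwoCells.
Context {C D : Cat} {P Q : Prof C D} (t : Tr P Q) (Nt : Natural t).

Lemma natural_covar e d d' (k : @hom C d d') x :
  t e d' (pmap P (idm e) k x) = pmap Q (idm e) k (t e d x).
Proof. apply Nt. Qed.

Lemma natural_contra d d' c (k : @hom D d d') y :
  t d c (pmap P k (idm c) y) = pmap Q k (idm c) (t d' c y).
Proof. apply Nt. Qed.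
End TwoCells.

Lemma tid_natural {C D} (P : Prof C D) : Natural (tid P).
Proof. intros ? ? ? ? ? ? ?; reflexivity. Qed.

Section Horizontal.
Context {C D E : Cat} {q q' : Prof D E} {p p' : Prof C D} (b : Tr q q') (g : Tr p p').

Lemma hcomp_ccls_weak
  (Hb : forall e d d' (k : @hom D d d') x, b e d' (pmap q (idm e) k x) = pmap q' (idm e) k (b e d x))
  (Hg : forall d d' c (k : @hom D d d') y, g d c (pmap p k (idm c) y) = pmap p' k (idm c) (g d' c y))
  e c d x y :
  hcomp b g e c (ccls q p d x y) = ccls q' p' d (b e d x) (g d c y).
Proof.
  apply (rep_cls_respect (fun t : CTot q p e c => let '(existT _ d (x, y)) := t in
    (ccls q' p' d (b e d x) (g d c y) : pob (pcomp q' p') e c))).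
  intros _ _ [d1 d2 k0 x0 y0]; rewrite Hb, Hg; apply ccls_slide.
Qed.

Lemma hcomp_ccls (Nb : Natural b) (Ng : Natural g) e c d x y :
  hcomp b g e c (ccls q p d x y) = ccls q' p' d (b e d x) (g d c y).
Proof. apply hcomp_ccls_weak; [apply natural_covar | apply natural_contra]; assumption. Qed.

Lemma hcomp_natural (Hq : ProfFunctorial q) (Hp : ProfFunctorial p)
  (Hq' : ProfFunctorial q') (Hp' : ProfFunctorial p') :
  Natural b -> Natural g -> Natural (hcomp b g).
Proof.
  intros Nb Ng e' e c c' h k z; destruct_cls z as [d [x y]].
  rewrite pmap_ccls, !hcomp_ccls, pmap_ccls, Nb, Ng by assumption; reflexivity.
Qed.
End Horizontal.

Lemma hcomp_tid {C D E : Cat} (q : Prof D E) (p : Prof C D) e c z :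
  hcomp (tid q) (tid p) e c z = z.
Proof. unfold hcomp, tid; rewrite <- (cls_rep z) at 2; destruct (rep z) as [d [x y]]; reflexivity. Qed.

(** No naturality is needed: the only morphisms of a discrete category are identities. *)
Lemma hcomp_ccls_disc {X : Type} {C E : Cat} {q q' : Prof (Disc X) E} {p p' : Prof C (Disc X)}
  (b : Tr q q') (g : Tr p p') (Hq : ProfFunctorial q) (Hp : ProfFunctorial p)
  (Hq' : ProfFunctorial q') (Hp' : ProfFunctorial p') e c d x y :
  hcomp b g e c (ccls q p d x y) = ccls q' p' d (b e d x) (g d c y).
Proof.
  apply hcomp_ccls_weak; intros ? ? ? k ?; destruct k;
    rewrite ?(pmap_idm Hq), ?(pmap_idm Hq'), ?(pmap_idm Hp), ?(pmap_idm Hp'); reflexivity.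
Qed.

Lemma natural_TrEq {C D : Cat} {P Q : Prof C D} (s t : Tr P Q) :
  TrEq s t -> Natural t -> Natural s.
Proof. intros E Nt d' d c c' h k x; rewrite !E; apply Nt. Qed.

Section Associator.
Context {C D E F : Cat} (r : Prof E F) (q : Prof D E) (p : Prof C D)
  (Hr : ProfFunctorial r) (Hq : ProfFunctorial q) (Hp : ProfFunctorial p).

Let assoc_rep f c d (y : pob p d c) (t : CTot r q f d) : pob (pcomp r (pcomp q p)) f c :=
  let '(existT _ e (x, v)) := t in ccls r (pcomp q p) e x (ccls q p d v y).

Let assoc_rep_respect f c d (y : pob p d c) e x v :
  assoc_rep f c d y (rep (ccls r q e x v)) = assoc_rep f c d y (existT _ e (x, v)).
Proof.
  apply (rep_cls_respect (assoc_rep f c d y)).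
  intros _ _ [e1 e2 k0 x0 v0]; simpl.
  replace (ccls q p d (pmap q k0 (idm d) v0) y : pob (pcomp q p) e1 c)
    with (pmap (pcomp q p) k0 (idm c) (ccls q p d v0 y))
    by (rewrite pmap_ccls, (pmap_idm Hp) by assumption; reflexivity).
  apply ccls_slide.
Qed.

Lemma assoc_ccls f c d e x v y :
  assoc r q p f c (ccls (pcomp r q) p d (ccls r q e x v : pob (pcomp r q) f d) y)
  = ccls r (pcomp q p) e x (ccls q p d v y).
Proof.
  unfold assoc.
  rewrite (rep_cls_respect (fun t : CTot (pcomp r q) p f c =>
             let '(existT _ d (w, y)) := t in assoc_rep f c d y (rep w))).
  - apply assoc_rep_respect.
  - intros _ _ [d1 d2 k0 w0 y0]; destruct_cls w0 as [e0 [x0 v0]].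
    rewrite pmap_ccls, (pmap_idm Hr), !assoc_rep_respect by assumption; simpl.
    rewrite ccls_slide; reflexivity.
Qed.

Let assoc_inv_rep f c e (x : pob r f e) (t : CTot q p e c) : pob (pcomp (pcomp r q) p) f c :=
  let '(existT _ d (v, y)) := t in ccls (pcomp r q) p d (ccls r q e x v) y.

Let assoc_inv_rep_respect f c e (x : pob r f e) d v y :
  assoc_inv_rep f c e x (rep (ccls q p d v y)) = assoc_inv_rep f c e x (existT _ d (v, y)).
Proof.
  apply (rep_cls_respect (assoc_inv_rep f c e x)).
  intros _ _ [d1 d2 k0 v0 y0]; simpl.
  replace (ccls r q e x (pmap q (idm e) k0 v0) : pob (pcomp r q) f d2)
    with (pmap (pcomp r q) (idm f) k0 (ccls r q e x v0))
    by (rewrite pmap_ccls, (pmap_idm Hr) by assumption; reflexivity).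
  apply ccls_slide.
Qed.

Lemma assoc_inv_ccls f c d e x v y :
  assoc_inv r q p f c (ccls r (pcomp q p) e x (ccls q p d v y : pob (pcomp q p) e c))
  = ccls (pcomp r q) p d (ccls r q e x v) y.
Proof.
  unfold assoc_inv.
  rewrite (rep_cls_respect (fun t : CTot r (pcomp q p) f c =>
             let '(existT _ e (x, w)) := t in assoc_inv_rep f c e x (rep w))).
  - apply assoc_inv_rep_respect.
  - intros _ _ [e1 e2 k0 x0 w0]; destruct_cls w0 as [d0 [v0 y0]].
    rewrite pmap_ccls, (pmap_idm Hp), !assoc_inv_rep_respect by assumption; simpl.
    rewrite ccls_slide; reflexivity.
Qed.

Lemma assoc_inv_natural : Natural (assoc_inv r q p).
Proof.
  intros f' f c c' h k z; destruct_cls z as [e [x w]]; destruct_cls w as [d [v y]].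
  rewrite !pmap_ccls, !assoc_inv_ccls, !pmap_ccls by functorial; reflexivity.
Qed.
End Associator.

Lemma lunit_ccls {C D} (p : Prof C D) (Hp : ProfFunctorial p) d c d' (h : @hom D d d') y :
  lunit p d c (ccls (HomP D) p d' (h : pob (HomP D) d d') y) = pmap p h (idm c) y.
Proof.
  apply (rep_cls_respect (fun t : CTot (HomP D) p d c =>
    let '(existT _ d' (h, y)) := t in pmap p h (idm c) y)).
  intros _ _ [d1 d2 k0 x0 y0]; simpl; rewrite (pmap_pmap Hp); cat_simpl; reflexivity.
Qed.

Lemma lunit_natural {C D} (p : Prof C D) (Hp : ProfFunctorial p) : Natural (lunit p).
Proof.
  intros d' d c c' h k z; destruct_cls z as [e [x y]].
  rewrite pmap_ccls, !lunit_ccls, !(pmap_pmap Hp) by functorial; simpl; cat_simpl; reflexivity.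
Qed.

Lemma adj_counit_ccls {C D} (F : Functor C D) d d' c x y :
  adj_counit F d d' (ccls (pstar F) (pupper F) c x y)
  = cmp (y : @hom D (fob F c) d') (x : @hom D d (fob F c)).
Proof.
  apply (rep_cls_respect (fun t : CTot (pstar F) (pupper F) d d' =>
    let '(existT _ c (x, y)) := t in
    (cmp (y : @hom D (fob F c) d') (x : @hom D d (fob F c)) : pob (HomP D) d d'))).
  intros _ _ [d1 d2 k0 x0 y0]; simpl; cat_simpl; reflexivity.
Qed.

Lemma adj_counit_natural {C D} (F : Functor C D) : Natural (adj_counit F).
Proof.
  intros d' d c c' h k z; destruct_cls z as [e [x y]].
  rewrite pmap_ccls, !adj_counit_ccls by functorial; simpl; rewrite !fmap_id; cat_simpl; reflexivity.
Qed.

Section YonedaK.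
Variables (B : Cat) (d : ob B -> ob B).
Notation i := (incl B).
Notation M := (dstar B d).
Notation In := (pcomp (pupper i) (dstar B d)).

Lemma ccls_upper_idm c c' a (k : pob (pupper i) c c') (f : pob M c' a) :
  ccls (pupper i) M c' k f
  = ccls (pupper i) M c (@idm B c : pob (pupper i) c c) (cmp f k : pob M c a).
Proof.
  transitivity (ccls (pupper i) M c' (pmap (pupper i) (idm c) k (@idm B c : pob (pupper i) c c)) f).
  - simpl; cat_simpl; reflexivity.
  - rewrite ccls_slide; simpl; cat_simpl; reflexivity.
Qed.

Lemma mu_ccls (mu : Tr (tens B M M) M) (Nmu : Natural mu) b a c c'
  (x : pob M b c) (k : pob (pupper i) c c') (f : pob M c' a) :
  mu b a (ccls M In c x (ccls (pupper i) M c' k f)) = cmp (PhiT B d mu c a (cmp f k)) x.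
Proof.
  rewrite ccls_upper_idm.
  transitivity (mu b a (pmap (tens B M M) x (idm a : @hom (Disc (ob B)) a a)
    (ccls M In c (@idm B (d c) : pob M (d c) c)
       (ccls (pupper i) M c (@idm B c : pob (pupper i) c c) (cmp f k : pob M c a))))).
  - unfold tens; rewrite pmap_ccls, (pmap_ccls (pupper i) M) by functorial.
    simpl; cat_simpl; reflexivity.
  - rewrite Nmu; unfold PhiT; simpl; cat_simpl; reflexivity.
Qed.

Lemma eta_PhiK (eta : Tr (unitK B) M) (Neta : Natural eta) b a (h : pob (unitK B) b a) :
  eta b a h = cmp (PhiK B d eta a) h.
Proof.
  transitivity (eta b a (pmap (unitK B) h (idm a : @hom (Disc (ob B)) a a)
                          (@idm B a : pob (unitK B) a a))).
  - simpl; cat_simpl; reflexivity.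
  - rewrite Neta; unfold PhiK; simpl; cat_simpl; reflexivity.
Qed.

Lemma PhiT_inj (mu mu' : Tr (tens B M M) M) :
  Natural mu -> Natural mu' ->
  (forall x y f, PhiT B d mu x y f = PhiT B d mu' x y f) -> TrEq mu mu'.
Proof.
  intros N N' H b a z; destruct_cls z as [c [x w]]; destruct_cls w as [c' [k f]].
  rewrite !mu_ccls, H by assumption; reflexivity.
Qed.

Lemma PhiK_inj (eta eta' : Tr (unitK B) M) :
  Natural eta -> Natural eta' -> (forall x, PhiK B d eta x = PhiK B d eta' x) -> TrEq eta eta'.
Proof. intros N N' H b a h; rewrite !eta_PhiK, H by assumption; reflexivity. Qed.

Definition mu_of_T (T : forall x y, @hom B x (d y) -> @hom B (d x) (d y)) : Tr (tens B M M) M :=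
  fun b a z => let '(existT _ c (x, w)) := rep z in
    let '(existT _ c' (k, f)) := rep w in
    (cmp (T c a (cmp (f : @hom B c' (d a)) (k : @hom B c c'))) (x : @hom B b (d c)) : pob M b a).

Definition eta_of_K (K : forall x, @hom B x (d x)) : Tr (unitK B) M :=
  fun b a h => (cmp (K a) (h : @hom B b a) : pob M b a).

Section MuOfT.
Variable T : forall x y, @hom B x (d y) -> @hom B (d x) (d y).

Lemma mu_of_T_ccls b a c c' (x : pob M b c) (k : pob (pupper i) c c') (f : pob M c' a) :
  mu_of_T T b a (ccls M In c x (ccls (pupper i) M c' k f))
  = cmp (T c a (cmp (f : @hom B c' (d a)) (k : @hom B c c'))) (x : @hom B b (d c)).
Proof.
  unfold mu_of_T.
  rewrite (rep_cls_respect (fun t : CTot M In b a => let '(existT _ c (x, w)) := t in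
    let '(existT _ c' (k, f)) := rep w in
    (cmp (T c a (cmp (f : @hom B c' (d a)) (k : @hom B c c'))) (x : @hom B b (d c)) : pob M b a))).
  - apply (rep_cls_respect (fun t : CTot (pupper i) M c a => let '(existT _ c' (k, f)) := t in
      (cmp (T c a (cmp (f : @hom B c' (d a)) (k : @hom B c c'))) (x : @hom B b (d c)) : pob M b a))).
    intros _ _ [c1 c2 k0 x0 y0]; simpl; cat_simpl; reflexivity.
  - intros _ _ [c1 c2 k0 x0 w0]; destruct k0.
    rewrite (pmap_idm (pstar_functorial (discF B d))), (pmap_idm (p := In)) by functorial.
    reflexivity.
Qed.

Lemma mu_of_T_natural : Natural (mu_of_T T).
Proof.
  intros b' b a a' h k z; destruct_cls z as [c [x w]]; destruct_cls w as [c' [kk f]].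
  unfold tens; rewrite pmap_ccls, (pmap_ccls (pupper i) M), !mu_of_T_ccls by functorial.
  destruct k; simpl; cat_simpl; reflexivity.
Qed.

Lemma PhiT_mu_of_T x y f : PhiT B d (mu_of_T T) x y f = T x y f.
Proof. unfold PhiT; rewrite mu_of_T_ccls; cat_simpl; reflexivity. Qed.
End MuOfT.

Lemma eta_of_K_natural K : Natural (eta_of_K K).
Proof. intros b' b a a' h k z; destruct k; unfold eta_of_K; simpl; cat_simpl; reflexivity. Qed.

Lemma PhiK_eta_of_K K x : PhiK B d (eta_of_K K) x = K x.
Proof. unfold PhiK, eta_of_K; cat_simpl; reflexivity. Qed.
End YonedaK.

Section MonoidAxioms.
Variables (B : Cat) (d : ob B -> ob B).
Notation i := (incl B).
Notation M := (dstar B d).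
Notation In := (pcomp (pupper i) (dstar B d)).
Variable mu : Tr (tens B M M) M.
Hypothesis Nmu : Natural mu.

Lemma mu_tens_mu_ccls b a c e e' c' (x : pob M b e) (k' : pob (pupper i) e e') (g : pob M e' c)
  (k : pob (pupper i) c c') (f : pob M c' a) :
  vcomp mu (tens2 B mu (tid M)) b a
    (ccls (tens B M M) In c (ccls M In e x (ccls (pupper i) M e' k' g)) (ccls (pupper i) M c' k f))
  = cmp (PhiT B d mu c a (cmp f k)) (cmp (PhiT B d mu e c (cmp g k')) x).
Proof.
  unfold vcomp, tens2; rewrite (hcomp_ccls_disc (q := tens B M M) (p := In)) by functorial.
  rewrite hcomp_tid, !mu_ccls by assumption; reflexivity.
Qed.

Lemma mu_tens_alpha_ccls b a c e e' c' (x : pob M b e) (k' : pob (pupper i) e e')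
  (g : pob M e' c) (k : pob (pupper i) c c') (f : pob M c' a) :
  vcomp mu (vcomp (tens2 B (tid M) mu) (alphaK B M M M)) b a
    (ccls (tens B M M) In c (ccls M In e x (ccls (pupper i) M e' k' g)) (ccls (pupper i) M c' k f))
  = cmp (PhiT B d mu e a (cmp (cmp (PhiT B d mu c a (cmp f k)) g) k')) x.
Proof.
  unfold alphaK, vcomp, tens2, tens.
  rewrite (assoc_ccls M In In), (hcomp_ccls_disc (q := M) (p := pcomp In In)) by functorial.
  rewrite (assoc_ccls (pupper i) M In), hcomp_ccls_disc by functorial.
  rewrite (hcomp_ccls (q := pupper i) (p := pcomp M In)) by (apply tid_natural || assumption).
  unfold tid; rewrite !mu_ccls by assumption; reflexivity.
Qed.

Lemma MonAssoc_iff_MwAssoc : MonAssoc B mu <-> MwAssoc (PhiT B d mu).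
Proof.
  split.
  - intros H x y z f g.
    pose proof (H (d x) z (ccls (tens B M M) In y
      (ccls M In x (@idm B (d x) : pob M (d x) x) (ccls (pupper i) M x (@idm B x : pob (pupper i) x x) f))
      (ccls (pupper i) M y (@idm B y : pob (pupper i) y y) g))) as E.
    rewrite mu_tens_mu_ccls, mu_tens_alpha_ccls in E; cat_simpl; rewrite !cmp_idr in E; exact E.
  - intros H b a z; destruct_cls z as [c [w v]]; destruct_cls w as [e [x u]].
    destruct_cls u as [e' [k' g]]; destruct_cls v as [c' [k f]].
    rewrite mu_tens_mu_ccls, mu_tens_alpha_ccls, cmp_assoc, H; cat_simpl; reflexivity.
Qed.

Variable eta : Tr (unitK B) M.
Hypothesis Neta : Natural eta.

Lemma mu_tens_eta_ccls b a c c' (h : pob (unitK B) b c) (k : pob (pupper i) c c') (f : pob M c' a) :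
  vcomp mu (tens2 B eta (tid M)) b a (ccls (unitK B) In c h (ccls (pupper i) M c' k f))
  = cmp (PhiT B d mu c a (cmp f k)) (cmp (PhiK B d eta c) h).
Proof.
  unfold vcomp, tens2; rewrite (hcomp_ccls_disc (q := unitK B) (p := In)) by functorial.
  rewrite hcomp_tid, mu_ccls, eta_PhiK by assumption; reflexivity.
Qed.

Lemma lamK_ccls b a c c' (h : pob (unitK B) b c) (k : pob (pupper i) c c') (f : pob M c' a) :
  lamK B M b a (ccls (unitK B) In c h (ccls (pupper i) M c' k f))
  = cmp (f : @hom B c' (d a)) (cmp (k : @hom B c c') (h : @hom B b c)).
Proof.
  unfold lamK, vcomp, unitK.
  rewrite (assoc_inv_ccls (pstar i) (pupper i) M) by functorial.
  rewrite (hcomp_ccls (q := pcomp (pstar i) (pupper i)) (p := M))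
    by (apply adj_counit_natural || apply tid_natural).
  rewrite adj_counit_ccls; unfold tid; rewrite lunit_ccls by functorial; simpl; cat_simpl; reflexivity.
Qed.

Lemma MonLeft_iff_MwLeft : MonLeft B mu eta <-> MwLeft (PhiT B d mu) (PhiK B d eta).
Proof.
  split.
  - intros H x y f.
    pose proof (H x y (ccls (unitK B) In x (@idm B x : pob (unitK B) x x)
      (ccls (pupper i) M x (@idm B x : pob (pupper i) x x) f))) as E.
    rewrite mu_tens_eta_ccls, lamK_ccls in E; cat_simpl; rewrite !cmp_idr in E; exact E.
  - intros H b a z; destruct_cls z as [c [h v]]; destruct_cls v as [c' [k f]].
    rewrite mu_tens_eta_ccls, lamK_ccls, cmp_assoc, H; cat_simpl; reflexivity.
Qed.

Lemma mu_tens_eta_rhoK b a (y : pob M b a) :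
  vcomp mu (vcomp (tens2 B (tid M) eta) (rhoK B M)) b a y
  = cmp (PhiT B d mu a a (PhiK B d eta a)) y.
Proof.
  unfold tens2, rhoK, vcomp, runit_inv, adj_unit, unitK, tid.
  rewrite (hcomp_ccls_disc (q := M) (p := HomP (Disc (ob B)))) by functorial.
  rewrite (hcomp_ccls_disc (q := M) (p := pcomp (pupper i) (pstar i))) by functorial.
  rewrite (hcomp_ccls (q := pupper i) (p := pstar i)) by (apply tid_natural || assumption).
  rewrite mu_ccls by assumption; unfold PhiK; simpl; cat_simpl; reflexivity.
Qed.

Lemma MonRight_iff_MwRight : MonRight B mu eta <-> MwRight (PhiT B d mu) (PhiK B d eta).
Proof.
  split.
  - intros H x; pose proof (H (d x) x (@idm B (d x) : pob M (d x) x)) as E.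
    rewrite mu_tens_eta_rhoK in E; unfold tid in E; rewrite cmp_idr in E; exact E.
  - intros H b a y; rewrite mu_tens_eta_rhoK, H; apply cmp_idl.
Qed.
End MonoidAxioms.

Section UMult.
Variable B : Cat.
Notation i := (incl B).
Variables (g f : Prof B B) (Hg : ProfFunctorial g) (Hf : ProfFunctorial f).
Notation uf := (pcomp f (pstar i)).

Lemma uK_mult_ccls b a c c' b1 b2 (x : pob g b b1) (j1 : pob (pstar i) b1 c)
  (k : pob (pupper i) c c') (y : pob f c' b2) (j2 : pob (pstar i) b2 a) :
  uK_mult B g f b a
    (ccls (uK B g) (pcomp (pupper i) (uK B f)) c (ccls g (pstar i) b1 x j1)
       (ccls (pupper i) (uK B f) c' k (ccls f (pstar i) b2 y j2)))
  = ccls (pcomp g f) (pstar i) b2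
      (ccls g f b1 x (pmap f (cmp (k : @hom B c c') (j1 : @hom B b1 c)) (idm b2) y)) j2.
Proof.
  unfold uK_mult, vcomp, uK.
  rewrite (assoc_ccls g (pstar i) (pcomp (pupper i) uf)) by functorial.
  rewrite (hcomp_ccls (q := g) (p := pcomp (pstar i) (pcomp (pupper i) uf)))
    by (apply tid_natural || apply assoc_inv_natural; functorial).
  rewrite (assoc_inv_ccls (pstar i) (pupper i) uf) by functorial.
  rewrite (hcomp_ccls (q := g) (p := pcomp (pcomp (pstar i) (pupper i)) uf))
    by (apply tid_natural || apply hcomp_natural;
        first [functorial | apply adj_counit_natural | apply tid_natural]).
  rewrite (hcomp_ccls (q := pcomp (pstar i) (pupper i)) (p := uf))
    by (apply tid_natural || apply adj_counit_natural).
  rewrite adj_counit_ccls.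
  rewrite (hcomp_ccls (q := g) (p := pcomp (HomP B) uf))
    by (apply tid_natural || apply lunit_natural; functorial).
  unfold tid; rewrite lunit_ccls, pmap_ccls, assoc_inv_ccls by functorial.
  simpl; cat_simpl; reflexivity.
Qed.
End UMult.

Section MonadToMw.
Variables (B : Cat) (Dm : Functor B B)
  (m : forall x, @hom B (fob Dm (fob Dm x)) (fob Dm x)) (e : forall x, @hom B x (fob Dm x)).
Hypothesis m_natural : forall a b (f : @hom B a b),
  cmp (fmap Dm f) (m a) = cmp (m b) (fmap Dm (fmap Dm f)).
Hypothesis e_natural : forall a b (f : @hom B a b), cmp (fmap Dm f) (e a) = cmp (e b) f.
Notation i := (incl B).
Notation M := (dstar B (fob Dm)).
Notation Ds := (pstar Dm).

Definition kleisli_ext x y (f : @hom B x (fob Dm y)) : @hom B (fob Dm x) (fob Dm y) :=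
  cmp (m y) (fmap Dm f).

Lemma phiD_ccls b a b' (x : pob Ds b b') (y : pob (pstar i) b' a) :
  phiD B Dm b a (ccls Ds (pstar i) b' x y)
  = cmp (fmap Dm (y : @hom B b' a)) (x : @hom B b (fob Dm b')).
Proof.
  apply (rep_cls_respect (fun t : CTot Ds (pstar i) b a => let '(existT _ b' (x, y)) := t in
    (cmp (fmap Dm (y : @hom B b' a)) (x : @hom B b (fob Dm b')) : pob M b a))).
  intros _ _ [d1 d2 k0 x0 y0]; simpl; rewrite !fmap_cmp, !fmap_id; cat_simpl; reflexivity.
Qed.

Lemma muD_ccls b a c (x : pob Ds b c) (y : pob Ds c a) :
  muD B Dm m b a (ccls Ds Ds c x y)
  = cmp (m a) (cmp (fmap Dm (y : @hom B c (fob Dm a))) (x : @hom B b (fob Dm c))).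
Proof.
  apply (rep_cls_respect (fun t : CTot Ds Ds b a => let '(existT _ c (x, y)) := t in
    (cmp (m a) (cmp (fmap Dm (y : @hom B c (fob Dm a))) (x : @hom B b (fob Dm c))) : pob Ds b a))).
  intros _ _ [d1 d2 k0 x0 y0]; simpl; rewrite !fmap_cmp, !fmap_id; cat_simpl; reflexivity.
Qed.

Lemma muD_natural : Natural (muD B Dm m).
Proof.
  intros b' b a a' h k z; destruct_cls z as [c [x y]].
  rewrite pmap_ccls, !muD_ccls by functorial; simpl.
  rewrite !fmap_cmp, !fmap_id; cat_simpl; rewrite m_natural; cat_simpl; reflexivity.
Qed.

Lemma etaD_natural : Natural (etaD B Dm e).
Proof.
  intros b' b a a' h k z; unfold etaD; simpl; cat_simpl; rewrite e_natural; cat_simpl; reflexivity.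
Qed.

Lemma phiD_inv_natural : Natural (phiD_inv B Dm).
Proof.
  intros b' b a a' h k z; destruct k; unfold phiD_inv, uK.
  rewrite (pmap_ccls Ds (pstar i)) by functorial; simpl; rewrite !fmap_id; cat_simpl; reflexivity.
Qed.

Lemma uMu_mu_of_T : TrEq (uMu B Dm m) (mu_of_T B (fob Dm) kleisli_ext).
Proof.
  intros b a z; destruct_cls z as [c [x w]]; destruct_cls w as [c' [k f]].
  rewrite mu_of_T_ccls; unfold uMu, tens2, vcomp.
  rewrite (hcomp_ccls_disc (q := M) (p := pcomp (pupper i) M)) by functorial.
  rewrite (hcomp_ccls (q := pupper i) (p := M) (p' := uK B Ds))
    by (apply tid_natural || apply phiD_inv_natural).
  unfold tid, phiD_inv; rewrite (uK_mult_ccls B Ds Ds) by functorial; unfold uK2.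
  rewrite (hcomp_ccls (q := pcomp Ds Ds) (p := pstar i))
    by (apply tid_natural || apply muD_natural).
  rewrite muD_ccls, phiD_ccls; unfold kleisli_ext, tid; simpl.
  rewrite !fmap_cmp, !fmap_id; cat_simpl; reflexivity.
Qed.

Lemma uEta_eta_of_K : TrEq (uEta B Dm e) (eta_of_K B (fob Dm) e).
Proof.
  intros b a h; unfold uEta, vcomp, uK_unit, lunit_inv, uK2.
  rewrite (hcomp_ccls (q := HomP B) (p := pstar i)) by (apply tid_natural || apply etaD_natural).
  rewrite phiD_ccls; unfold etaD, eta_of_K, tid; simpl; cat_simpl; rewrite e_natural; reflexivity.
Qed.
Lemma uMu_natural : Natural (uMu B Dm m).
Proof. eapply natural_TrEq; [apply uMu_mu_of_T | apply mu_of_T_natural]. Qed.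

Lemma uEta_natural : Natural (uEta B Dm e).
Proof. eapply natural_TrEq; [apply uEta_eta_of_K | apply eta_of_K_natural]. Qed.

Lemma PhiT_uMu x y (f : @hom B x (fob Dm y)) :
  PhiT B (fob Dm) (uMu B Dm m) x y f = kleisli_ext x y f.
Proof. unfold PhiT; rewrite uMu_mu_of_T; apply PhiT_mu_of_T. Qed.

Lemma PhiK_uEta x : PhiK B (fob Dm) (uEta B Dm e) x = e x.
Proof. unfold PhiK; rewrite uEta_eta_of_K; apply PhiK_eta_of_K. Qed.

End MonadToMw.

Section MonadMonoid.
Variables (B : Cat) (Dm : Functor B B)
  (m : forall x, @hom B (fob Dm (fob Dm x)) (fob Dm x)) (e : forall x, @hom B x (fob Dm x)).
Hypothesis monad : IsMonad B Dm m e.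

Lemma kleisli_ext_MwMonad : MwMonad (kleisli_ext B Dm m) e.
Proof.
  destruct monad as (m_nat & e_nat & m_assoc & m_unit_l & m_unit_r); unfold kleisli_ext.
  split; [|split].
  - intros x y z f g; rewrite !fmap_cmp; cat_simpl.
    rewrite <- (cmp_assoc B _ _ _ _ (m z) (fmap Dm g) (m y)), m_nat; cat_simpl.
    rewrite m_assoc; cat_simpl; reflexivity.
  - intros x y f; rewrite <- cmp_assoc, e_nat; cat_simpl; rewrite m_unit_l; cat_simpl; reflexivity.
  - intros x; apply m_unit_r.
Qed.

Lemma uK_monad_Monoid : Monoid B (dstar B (fob Dm)) (uMu B Dm m) (uEta B Dm e).
Proof.
  pose proof monad as (m_nat & e_nat & _).
  destruct kleisli_ext_MwMonad as (Ha & Hl & Hr).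
  assert (HT : PhiT B (fob Dm) (uMu B Dm m) = kleisli_ext B Dm m).
  { do 3 (apply functional_extensionality_dep; intro); apply PhiT_uMu, m_nat. }
  assert (HK : PhiK B (fob Dm) (uEta B Dm e) = e).
  { apply functional_extensionality_dep; intro; apply PhiK_uEta, e_nat. }
  pose proof (uMu_natural B Dm m m_nat) as Nmu.
  pose proof (uEta_natural B Dm e e_nat) as Neta.
  split; [|split].
  - apply MonAssoc_iff_MwAssoc; [exact Nmu | rewrite HT; exact Ha].
  - apply MonLeft_iff_MwLeft; [exact Nmu | exact Neta | rewrite HT, HK; exact Hl].
  - apply MonRight_iff_MwRight; [exact Nmu | exact Neta | rewrite HT, HK; exact Hr].
Qed.
End MonadMonoid.

Theorem mainTheorem7 (B : Cat) :
  (forall d : ob B -> ob B,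
     (forall K : forall x, @hom B x (d x),
        exists eta : Tr (unitK B) (dstar B d),
          Natural eta /\ forall x, PhiK B d eta x = K x) /\
     (forall eta eta' : Tr (unitK B) (dstar B d),
        Natural eta -> Natural eta' ->
        (forall x, PhiK B d eta x = PhiK B d eta' x) -> TrEq eta eta') /\
     (forall T : forall x y, @hom B x (d y) -> @hom B (d x) (d y),
        exists mu : Tr (tens B (dstar B d) (dstar B d)) (dstar B d),
          Natural mu /\ forall x y f, PhiT B d mu x y f = T x y f) /\
     (forall mu mu' : Tr (tens B (dstar B d) (dstar B d)) (dstar B d),
        Natural mu -> Natural mu' ->
        (forall x y f, PhiT B d mu x y f = PhiT B d mu' x y f) -> TrEq mu mu') /\
     (forall (mu : Tr (tens B (dstar B d) (dstar B d)) (dstar B d))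
             (eta : Tr (unitK B) (dstar B d)),
        Natural mu -> Natural eta ->
        (MonAssoc B mu <-> MwAssoc (PhiT B d mu)) /\
        (MonLeft B mu eta <-> MwLeft (PhiT B d mu) (PhiK B d eta)) /\
        (MonRight B mu eta <-> MwRight (PhiT B d mu) (PhiK B d eta)))) /\
  (forall (Dm : Functor B B)
          (m : forall x, @hom B (fob Dm (fob Dm x)) (fob Dm x))
          (e : forall x, @hom B x (fob Dm x)),
     IsMonad B Dm m e ->
     Monoid B (dstar B (fob Dm)) (uMu B Dm m) (uEta B Dm e) /\
     (forall x y (f : @hom B x (fob Dm y)),
        PhiT B (fob Dm) (uMu B Dm m) x y f = cmp (m y) (fmap Dm f)) /\
     (forall x, PhiK B (fob Dm) (uEta B Dm e) x = e x)).
Proof.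
  split.
  - intros d; split; [|split; [|split; [|split]]].
    + intros K; exists (eta_of_K B d K); split; [apply eta_of_K_natural | apply PhiK_eta_of_K].
    + apply PhiK_inj.
    + intros T; exists (mu_of_T B d T); split; [apply mu_of_T_natural | apply PhiT_mu_of_T].
    + apply PhiT_inj.
    + intros mu eta Nmu Neta; split; [|split];
        [apply MonAssoc_iff_MwAssoc | apply MonLeft_iff_MwLeft | apply MonRight_iff_MwRight];
        assumption.
  - intros Dm m e monad; split; [|split].
    + apply uK_monad_Monoid, monad.
    + exact (PhiT_uMu B Dm m (proj1 monad)).
    + exact (PhiK_uEta B Dm e (proj1 (proj2 monad))).
Qed.
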